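(* Let $\rho_G=U|0\rangle\langle 0|^{\otimes n}U^\dagger$ where $U$ is any element of the group generated by the unitaries $e^{\theta c_jc_k}$, $1\le j<k\le 2n$, $\theta\in\mathbb{R}$ (a pure fermionic Gaussian state). Then for $\alpha=0,\dots,2n$: $\mathcal{P}_\alpha(\rho_G)=\binom{n}{\alpha/2}/2^n$ if $\alpha$ is even, and $\mathcal{P}_\alpha(\rho_G)=0$ if $\alpha$ is odd.
   Context: On $\mathcal{H}=(\mathbb{C}^2)^{\otimes n}$ define the Majorana operators $c_{2j-1}=Z^{\otimes(j-1)}\otimes X\otimes\mathbb{1}^{\otimes(n-j)}$ and $c_{2j}=Z^{\otimes(j-1)}\otimes Y\otimes\mathbb{1}^{\otimes(n-j)}$ for $j=1,\dots,n$. For $\alpha=0,\dots,2n$, $\mathcal{L}_\alpha\subseteq\mathcal{L}(\mathcal{H})$ is the span of the products $c_{i_1}c_{i_2}\cdots c_{i_\alpha}$ with $1\le i_1<\dots<i_\alpha\le 2n$ (dimension $\binom{2n}{\alpha}$); these are the irreducible components of $\mathcal{L}(\mathcal{H})$ under conjugation by the spinor representation of $\mathbb{SO}(2n)$. Each such product is, up to a phase, a Pauli string; the orthonormal basis used consists of the Hermitian Pauli strings (up to sign) in $\mathcal{L}_\alpha$ divided by $\sqrt{2^n}$, and $\mathcal{P}_\alpha(\rho)=\sum_\mu\mathrm{Tr}[B^\mu\rho]^2$ over this basis. *)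

From HB Require Import structures.
From mathcomp Require Import all_boot all_order all_algebra.
From mathcomp Require Import reals trigo.
From mathcomp Require Import complex.

Set Implicit Arguments.
Unset Strict Implicit.
Unset Printing Implicit Defensive.

Import Order.TTheory GRing.Theory Num.Theory.
Local Open Scope ring_scope.
Local Open Scope complex_scope.

Section Fermions.
Variable R : realType.
Local Notation C := R[i].
Variable n : nat.

(* Computational basis of (C^2)^{\otimes n}: index i : 'I_(2^n) encodes the
   bit string with qubit q (0-indexed, q = 0 the leftmost tensor factor)
   given by bit (n-1-q) of i (big-endian Kronecker convention). *)
Definition qbit (q : 'I_n) (i : 'I_(2 ^ n)) : bool :=
  odd (i %/ 2 ^ (n.-1 - q)).

Definition sI (a b : bool) : C := if a == b then 1 else 0.
Definition sX (a b : bool) : C := if a == b then 0 else 1.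
Definition sY (a b : bool) : C :=
  if a == b then 0 else if a then 'i else - 'i.
Definition sZ (a b : bool) : C :=
  if a == b then (if a then -1 else 1) else 0.

(* Majorana operators, 0-indexed: for qubit j (0-indexed),
   maj (2j)   = Z^{(x) j} (x) X (x) 1^{(x)(n-j-1)}   (= c_{2j+1} in the paper)
   maj (2j+1) = Z^{(x) j} (x) Y (x) 1^{(x)(n-j-1)}   (= c_{2j+2} in the paper).
   The entries of the Kronecker product are written out as products of
   single-qubit entries. *)
Definition maj (a : 'I_(2 * n)) : 'M[C]_(2 ^ n) :=
  \matrix_(i, k) \prod_(q < n)
     (if (q < a./2)%N then sZ (qbit q i) (qbit q k)
      else if q == a./2 :> nat then
        (if odd a then sY (qbit q i) (qbit q k) else sX (qbit q i) (qbit q k))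
      else sI (qbit q i) (qbit q k)).

Definition majprod (S : {set 'I_(2 * n)}) : 'M[C]_(2 ^ n) :=
  foldr (fun a M => maj a *m M) 1%:M (enum S).

(* Orthonormal basis element of L_alpha attached to S (|S| = alpha):
   the Hermitian Pauli string i^{alpha(alpha-1)/2} c_S (Hermitian since
   c_S^dagger = (-1)^{alpha(alpha-1)/2} c_S), divided by sqrt(2^n). *)
Definition Bbasis (S : {set 'I_(2 * n)}) : 'M[C]_(2 ^ n) :=
  ((sqrtC (2 ^+ n))^-1 * 'i ^+ ('C(#|S|, 2))) *: majprod S.

Definition Palpha (alpha : nat) (rho : 'M[C]_(2 ^ n)) : C :=
  \sum_(S : {set 'I_(2 * n)} | #|S| == alpha) (\tr (Bbasis S *m rho)) ^+ 2.

(* e^{theta c_j c_k} for j <> k: since (c_j c_k)^2 = -1 the exponential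
   series sums to cos(theta) 1 + sin(theta) c_j c_k. *)
Definition gate (j k : 'I_(2 * n)) (theta : R) : 'M[C]_(2 ^ n) :=
  (cos theta)%:C *: 1%:M + (sin theta)%:C *: (maj j *m maj k).

(* An element of the group generated by the gates e^{theta c_j c_k}, j < k:
   a finite product of generators and their inverses.  A word is a list of
   (j, k, theta, inverted?) *)
Definition word := seq ('I_(2 * n) * 'I_(2 * n) * R * bool).

Definition word_ok (w : word) : bool :=
  all (fun g : 'I_(2 * n) * 'I_(2 * n) * R * bool => (g.1.1.1 < g.1.1.2)%N) w.

Definition word_eval (w : word) : 'M[C]_(2 ^ n) :=
  foldr (fun (g : 'I_(2 * n) * 'I_(2 * n) * R * bool) M =>
           (if g.2 then invmx (gate g.1.1.1 g.1.1.2 g.1.2)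
            else gate g.1.1.1 g.1.1.2 g.1.2) *m M) 1%:M w.

Definition in_gaussian_group (U : 'M[C]_(2 ^ n)) : Prop :=
  exists w : word, word_ok w /\ U = word_eval w.

Definition adj (U : 'M[C]_(2 ^ n)) : 'M[C]_(2 ^ n) := (map_mx conjc U)^T.

Definition zero_index : 'I_(2 ^ n) := Ordinal (expn_gt0 2 n).
Definition rho0 : 'M[C]_(2 ^ n) := delta_mx zero_index zero_index.

Definition gaussian_state (U : 'M[C]_(2 ^ n)) : 'M[C]_(2 ^ n) :=
  U *m rho0 *m adj U.

End Fermions.

From HB Require Import structures.
From mathcomp Require Import all_boot all_order all_algebra.
From mathcomp Require Import boolp reals trigo.
From mathcomp Require Import complex.
From mathcomp Require Import zify ring.
Import GRing.Theory Num.Theory.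
Local Open Scope ring_scope.
Local Open Scope complex_scope.

Set Implicit Arguments.
Unset Strict Implicit.
Unset Printing Implicit Defensive.

(* The generator e^{t c_j c_k} = cos t + sin t c_j c_k commutes with every Majorana
   monomial c_S containing both or none of c_j, c_k.  For the other ones,
   c_j c_k c_S = e_S c_S' with S' = S xor {j, k}, |S'| = |S| and e_S' = - e_S (as
   (c_j c_k)^2 = -1), so conjugation rotates the pair (c_S, c_S') by the angle 2t.
   Rotations preserve sums of squares, hence P_alpha is invariant under Gaussian
   unitaries and it suffices to evaluate it on |0...0>.  There <0|c_S|0> vanishes unless
   S is a union of pairs {c_2q-1, c_2q}, for which c_2q-1 c_2q = i Z_q; each of the
   C(n, alpha/2) such S contributes 2^-n i^(2 C(alpha, 2)) i^alpha = 2^-n. *)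

Lemma eq_low_bits (m i k : nat) : (i < 2 ^ m)%N -> (k < 2 ^ m)%N ->
  (forall t, (t < m)%N -> odd (i %/ 2 ^ t) = odd (k %/ 2 ^ t)) -> i = k.
Proof.
elim: m i k => [|m IH] i k hi hk eq_bits.
  by rewrite expn0 in hi hk; lia.
have eq_half : (i %/ 2 = k %/ 2)%N.
  apply: IH; rewrite ?ltn_divLR -?expnSr // => t ht.
  by rewrite -!divnMA -expnS; apply: eq_bits.
have := eq_bits 0%N (ltn0Sn _); rewrite expn0 !divn1 => eq_odd.
by rewrite (divn_eq i 2) (divn_eq k 2) !modn2 eq_half eq_odd.
Qed.

Section QubitTensor.
Variable R : realType.
Local Notation C := R[i].
Variable n : nat.

Definition qmul (f g : bool -> bool -> C) (a b : bool) : C :=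
  \sum_(c : bool) f a c * g c b.

Definition qtensor (F : 'I_n -> bool -> bool -> C) : 'M[C]_(2 ^ n) :=
  \matrix_(i, k) \prod_(q < n) F q (qbit q i) (qbit q k).

Definition qbits (i : 'I_(2 ^ n)) : {ffun 'I_n -> bool} := [ffun q => qbit q i].

Lemma qbits_inj : injective qbits.
Proof.
move=> i k /ffunP eq_ik; apply/val_inj/(@eq_low_bits n) => [||t ht]; try exact: ltn_ord.
have hq : (n.-1 - t < n)%N by lia.
have := eq_ik (Ordinal hq); rewrite !ffunE /qbit /=.
by have -> : (n.-1 - (n.-1 - t) = t)%N by lia.
Qed.

Lemma qbits_bij : bijective qbits.
Proof.
by apply: (inj_card_bij qbits_inj); rewrite card_ffun card_bool !card_ord.
Qed.

Lemma qtensorM F G : qtensor F *m qtensor G = qtensor (fun q => qmul (F q) (G q)).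
Proof.
apply/matrixP => i k; rewrite !mxE /qmul bigA_distr_bigA /=.
rewrite (reindex qbits); last exact/onW_bij/qbits_bij.
apply: eq_bigr => l _; rewrite !mxE -big_split /=.
by apply: eq_bigr => q _; rewrite ffunE.
Qed.

Lemma qtensor1 : qtensor (fun _ => sI R) = 1%:M.
Proof.
apply/matrixP => i k; rewrite !mxE; have [<-|neq_ik] := eqVneq i k.
  by rewrite big1 // => q _; rewrite /sI eqxx.
have [q neq_q] : exists q, qbit q i != qbit q k.
  apply/existsP; apply: contraNT neq_ik; rewrite negb_exists => /forallP eq_q.
  by apply/eqP/qbits_inj/ffunP => q; rewrite !ffunE; apply/eqP; move: (eq_q q); rewrite negbK.
by rewrite (bigD1 q) //= /sI (negbTE neq_q) mul0r.
Qed.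

Lemma eq_qtensor F G : (forall q, F q =2 G q) -> qtensor F = qtensor G.
Proof. by move=> eqFG; apply/matrixP => i k; rewrite !mxE; apply: eq_bigr => q _; apply: eqFG. Qed.

Lemma qtensorZ (s : 'I_n -> C) F :
  qtensor (fun q a b => s q * F q a b) = (\prod_q s q) *: qtensor F.
Proof. by apply/matrixP => i k; rewrite !mxE big_split. Qed.

Lemma adj_qtensor F : adj (qtensor F) = qtensor (fun q a b => (F q b a)^*).
Proof. by apply/matrixP => i k; rewrite !mxE rmorph_prod. Qed.

End QubitTensor.

Section Pauli.
Variable R : realType.
Local Notation C := R[i].
Local Notation qmul := (@qmul R).

Definition qcommute (s : C) (f g : bool -> bool -> C) : Prop :=
  forall a b, qmul f g a b = s * qmul g f a b.

Lemma qmul1f f : qmul (sI R) f = f.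
Proof.
apply/funext => a; apply/funext => b; rewrite /qmul big_bool /sI.
by case: a; rewrite /= ?mul1r ?mul0r ?addr0 ?add0r.
Qed.

Lemma qmulf1 f : qmul f (sI R) = f.
Proof.
apply/funext => a; apply/funext => b; rewrite /qmul big_bool /sI.
by case: b; rewrite /= ?mulr1 ?mulr0 ?addr0 ?add0r.
Qed.

Lemma mul_ii : 'i * 'i = -1 :> C.
Proof. by rewrite -expr2 sqr_i. Qed.

Local Ltac pauli_table := move=> [] []; rewrite /qmul !big_bool /sI /sX /sY /sZ /=;
  rewrite ?(mul0r, mulr0, mul1r, mulr1, add0r, addr0, mulrN, mulNr, opprK, oppr0, mul_ii).

Lemma qmulXX : qmul (sX R) (sX R) =2 sI R. Proof. by pauli_table. Qed.
Lemma qmulYY : qmul (sY R) (sY R) =2 sI R. Proof. by pauli_table. Qed.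
Lemma qmulZZ : qmul (sZ R) (sZ R) =2 sI R. Proof. by pauli_table. Qed.

Lemma qcommute_XZ : qcommute (-1) (sX R) (sZ R). Proof. by pauli_table. Qed.
Lemma qcommute_YZ : qcommute (-1) (sY R) (sZ R). Proof. by pauli_table. Qed.
Lemma qcommute_XY : qcommute (-1) (sX R) (sY R). Proof. by pauli_table. Qed.

Lemma qcommuteN_sym f g : qcommute (-1) f g -> qcommute (-1) g f.
Proof. by move=> fg a b; rewrite fg !mulN1r opprK. Qed.

Lemma qcommute_refl f : qcommute 1 f f.
Proof. by move=> a b; rewrite mul1r. Qed.

Lemma qcommute1f f : qcommute 1 (sI R) f.
Proof. by move=> a b; rewrite qmul1f qmulf1 mul1r. Qed.

Lemma qcommutef1 f : qcommute 1 f (sI R).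
Proof. by move=> a b; rewrite qmul1f qmulf1 mul1r. Qed.

Definition qherm (f : bool -> bool -> C) : Prop := forall a b, (f b a)^* = f a b.

Local Ltac herm_table := move=> [] []; apply/eqP;
  rewrite /sI /sX /sY /sZ eq_complex /= ?oppr0 ?opprK ?eqxx.

Lemma qherm_I : qherm (sI R). Proof. by herm_table. Qed.
Lemma qherm_X : qherm (sX R). Proof. by herm_table. Qed.
Lemma qherm_Y : qherm (sY R). Proof. by herm_table. Qed.
Lemma qherm_Z : qherm (sZ R). Proof. by herm_table. Qed.

End Pauli.

Section Majorana.
Variable R : realType.
Local Notation C := R[i].
Variable n : nat.
Local Notation maj := (@maj R n).

Definition maj_factor (a : nat) (q : 'I_n) (x y : bool) : C :=
  if (q < a./2)%N then sZ R x y
  else if q == a./2 :> nat then (if odd a then sY R x y else sX R x y)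
  else sI R x y.

Lemma maj_qtensor (a : 'I_(2 * n)) : maj a = qtensor (maj_factor a).
Proof. by []. Qed.

Lemma maj_factorE a q : maj_factor a q =
  if (q < a./2)%N then sZ R
  else if q == a./2 :> nat then (if odd a then sY R else sX R)
  else sI R.
Proof. by apply/funext => x; apply/funext => y; rewrite /maj_factor; do 3?case: ifP. Qed.

Lemma half_ord_lt (a : 'I_(2 * n)) : (a./2 < n)%N.
Proof. by have := ltn_ord a; rewrite -[val a]odd_double_half; lia. Qed.

Lemma maj_factor_commute (a b : nat) (q : 'I_n) : a != b ->
  qcommute (if q == minn a./2 b./2 :> nat then -1 else 1)
    (maj_factor a q) (maj_factor b q).
Proof.
move=> neq_ab; have odd_neq : (a./2 == b./2) ==> (odd a != odd b).
  apply/implyP => /eqP eq_half; apply: contra_neq neq_ab => eq_odd.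
  by rewrite -[a]odd_double_half -[b]odd_double_half eq_half eq_odd.
rewrite !maj_factorE.
case: (ltngtP q a./2) => qa; case: (ltngtP q b./2) => qb;
  case: (boolP (q == minn a./2 b./2 :> nat)) => q_min; try (exfalso; lia);
  try exact: qcommute_refl; try exact: qcommute1f; try exact: qcommutef1.
- by case: (odd b); apply: qcommuteN_sym; [exact: qcommute_YZ | exact: qcommute_XZ].
- by case: (odd a); [exact: qcommute_YZ | exact: qcommute_XZ].
- move: odd_neq; rewrite -qa -qb eqxx /=.
  by case: (odd a); case: (odd b) => // _; [apply: qcommuteN_sym|]; exact: qcommute_XY.
Qed.

Lemma maj_anticomm (a b : 'I_(2 * n)) : a != b -> maj a *m maj b = - (maj b *m maj a).
Proof.
move=> neq_ab; rewrite !maj_qtensor !qtensorM.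
set sgn := fun q : 'I_n => if q == minn a./2 b./2 :> nat then -1 else 1 : C.
rewrite (eq_qtensor (G := fun q x y => sgn q * qmul (maj_factor b q) (maj_factor a q) x y));
  last by move=> q; apply: maj_factor_commute.
have lt_min : (minn a./2 b./2 < n)%N by have := half_ord_lt a; lia.
rewrite qtensorZ (bigD1 (Ordinal lt_min)) //= {1}/sgn eqxx big1 ?mulr1 ?scaleN1r // => q neq_q.
by rewrite /sgn ifF //; apply: contraNF neq_q => /eqP eq_q; apply/eqP/val_inj.
Qed.

Lemma maj_sqr (a : 'I_(2 * n)) : maj a *m maj a = 1%:M.
Proof.
rewrite maj_qtensor qtensorM -qtensor1; apply: eq_qtensor => q; rewrite maj_factorE.
case: ifP => _; first exact: qmulZZ.
case: ifP => _; last by rewrite qmul1f.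
by case: (odd a); [exact: qmulYY | exact: qmulXX].
Qed.

Lemma adj_maj (a : 'I_(2 * n)) : adj (maj a) = maj a.
Proof.
rewrite maj_qtensor adj_qtensor; apply: eq_qtensor => q x y; rewrite /maj_factor.
case: ifP => _; first exact: qherm_Z.
case: ifP => _; last exact: qherm_I.
by case: (odd a); [exact: qherm_Y | exact: qherm_X].
Qed.

End Majorana.

Section Toggle.
Variable m : nat.
Implicit Types (x y z : 'I_m) (l : seq 'I_m) (S : {set 'I_m}).

Definition ord_lt : rel 'I_m := fun x y => (x < y)%N.

Lemma ord_lt_trans : transitive ord_lt.
Proof. by move=> x y z; apply: ltn_trans. Qed.

Lemma ord_lt_irr : irreflexive ord_lt.
Proof. exact: ltnn. Qed.

Lemma sorted_cons_ord_lt y l : sorted ord_lt (y :: l) = all (ord_lt y) l && sorted ord_lt l.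
Proof. by rewrite /= path_sortedE //; exact: ord_lt_trans. Qed.

Lemma sorted_enum_ord_lt S : sorted ord_lt (enum S).
Proof.
rewrite /enum_mem -enumT; apply: sorted_filter; first exact: ord_lt_trans.
by have := iota_ltn_sorted 0 m; rewrite -val_enum_ord sorted_map.
Qed.

Fixpoint toggle_sorted x l : seq 'I_m :=
  if l is y :: l' then
    if (x < y)%N then x :: l else if x == y then l' else y :: toggle_sorted x l'
  else [:: x].

Lemma mem_toggle_sorted x l : sorted ord_lt l ->
  forall z, (z \in toggle_sorted x l) = ((z == x) != (z \in l)).
Proof.
elim: l => [|y l IH]; first by move=> _ z; rewrite !inE; case: (z == x).
rewrite sorted_cons_ord_lt => /andP [/allP lt_y sorted_l] z /=.
case: ifP => lt_xy.
  rewrite !inE; have [->|neq_zx] /= := eqVneq z x; last by case: (z == y); case: (z \in l).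
  have -> : x \in l = false by apply/negP => /lt_y; rewrite /ord_lt; lia.
  by have -> : x == y = false by apply/negP => /eqP eq_xy; move: lt_xy; rewrite eq_xy ltnn.
have [eq_xy|neq_xy] := eqVneq x y.
  rewrite !inE -eq_xy; have [->|neq_zx] /= := eqVneq z x; last by case: (z \in l).
  by apply/negP => /lt_y; rewrite -eq_xy /ord_lt ltnn.
rewrite !inE IH //; have [->|] /= := eqVneq z y; last by case: (z == x); case: (z \in l).
by rewrite [y == x]eq_sym (negbTE neq_xy).
Qed.

Lemma sorted_toggle_sorted x l : sorted ord_lt l -> sorted ord_lt (toggle_sorted x l).
Proof.
elim: l => [|y l IH] // sorted_yl.
move: (sorted_yl); rewrite sorted_cons_ord_lt => /andP [/allP lt_y sorted_l] /=.
case: ifP => lt_xy.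
  rewrite sorted_cons_ord_lt sorted_yl andbT /= {1}/ord_lt lt_xy /=.
  by apply/allP => z /lt_y; apply: ord_lt_trans.
have [//|neq_xy] := eqVneq x y.
rewrite sorted_cons_ord_lt IH // andbT; apply/allP => z.
rewrite mem_toggle_sorted //; have [-> _|_ /negPn /lt_y //] := eqVneq z x.
by have : (x : nat) != y by []; rewrite /ord_lt; lia.
Qed.

Definition toggle x S : {set 'I_m} := if x \in S then S :\ x else x |: S.

Lemma mem_toggle x S z : (z \in toggle x S) = ((z == x) != (z \in S)).
Proof.
rewrite /toggle; case: ifP => Sx; rewrite !inE;
  by have [->|] //= := eqVneq z x; rewrite ?Sx //; case: (z \in S).
Qed.

Lemma enum_toggle x S : enum (toggle x S) = toggle_sorted x (enum S).
Proof.
apply: (irr_sorted_eq ord_lt_trans ord_lt_irr).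
- exact: sorted_enum_ord_lt.
- exact/sorted_toggle_sorted/sorted_enum_ord_lt.
by move=> z; rewrite mem_toggle_sorted ?mem_enum ?mem_toggle //; exact: sorted_enum_ord_lt.
Qed.

Lemma toggleK x : involutive (toggle x).
Proof. by move=> S; apply/setP => z; rewrite !mem_toggle; case: (z == x); case: (z \in S). Qed.

Lemma toggleC x y S : toggle x (toggle y S) = toggle y (toggle x S).
Proof.
by apply/setP => z; rewrite !mem_toggle; case: (z == x); case: (z == y); case: (z \in S).
Qed.

Lemma card_toggle x S : (#|toggle x S| + (x \in S) = #|S| + (x \notin S))%N.
Proof.
rewrite /toggle; case: ifP => Sx; last by rewrite cardsU1 Sx /=; lia.
by rewrite (cardsD1 x S) Sx /= addn0 addn1 add1n.
Qed.

End Toggle.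

Section MajoranaProducts.
Variable R : realType.
Local Notation C := R[i].
Variable n : nat.
Local Notation M := 'M[C]_(2 ^ n).
Local Notation maj := (@maj R n).
Local Notation majprod := (@majprod R n).
Implicit Types (x : 'I_(2 * n)) (l : seq 'I_(2 * n)) (S : {set 'I_(2 * n)}).

Definition majlist l : M := foldr (fun a A => maj a *m A) 1%:M l.

Lemma majprodE S : majprod S = majlist (enum S). Proof. by []. Qed.

Definition maj_sign x S : C := (-1) ^+ count (fun s : 'I_(2 * n) => (s < x)%N) (enum S).

Lemma maj_majlist x l : sorted (@ord_lt _) l ->
  maj x *m majlist l =
  (-1) ^+ count (fun s : 'I_(2 * n) => (s < x)%N) l *: majlist (toggle_sorted x l).
Proof.
elim: l => [|y l IH]; first by rewrite /= expr0 scale1r.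
rewrite sorted_cons_ord_lt => /andP [/allP lt_y sorted_l] /=.
have count0 : (x <= y)%N -> count (fun s : 'I_(2 * n) => (s < x)%N) l = 0%N.
  move=> le_xy; rewrite (eq_in_count (a2 := pred0)) ?count_pred0 // => z /lt_y.
  by rewrite /ord_lt /=; lia.
case: ifP => lt_xy.
  have -> : (y < x)%N = false by lia.
  by rewrite count0 ?expr0 ?scale1r //; lia.
have [eq_xy|neq_xy] := eqVneq x y.
  by subst y; rewrite (count0 (leqnn x)) ltnn expr0 scale1r mulmxA maj_sqr mul1mx.
have lt_yx : (y < x)%N by move: neq_xy lt_xy; rewrite -(inj_eq val_inj) /=; lia.
rewrite lt_yx mulmxA maj_anticomm // mulNmx -mulmxA IH //= add1n exprS mulN1r.
by rewrite scaleNr scalemxAr.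
Qed.

Lemma maj_majprod x S : maj x *m majprod S = maj_sign x S *: majprod (toggle x S).
Proof. by rewrite !majprodE maj_majlist ?sorted_enum_ord_lt // enum_toggle. Qed.

Lemma majlist_rcons l a : majlist (rcons l a) = majlist l *m maj a.
Proof. by elim: l => [|b l IH] /=; rewrite ?mulmx1 ?mul1mx // IH mulmxA. Qed.

Lemma majlist_rev l : majlist l *m majlist (rev l) = 1%:M.
Proof.
elim: l => [|a l IH] /=; first by rewrite mulmx1.
by rewrite rev_cons majlist_rcons mulmxA -(mulmxA (maj a)) IH mulmx1 maj_sqr.
Qed.

Lemma scalar_mx1_neq0 : (1%:M : M) != 0.
Proof.
apply/negP => /eqP /matrixP /(_ (zero_index n) (zero_index n)).
by rewrite !mxE eqxx /= => /eqP; rewrite oner_eq0.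
Qed.

Lemma majprod_neq0 S : majprod S != 0.
Proof.
apply: contraNneq scalar_mx1_neq0 => majprod0.
by rewrite -(majlist_rev (enum S)) -majprodE majprod0 mul0mx.
Qed.

Section Pair.
Variables j k : 'I_(2 * n).
Hypothesis neq_jk : j != k.
Local Notation P := (maj j *m maj k).

Lemma pair_sqr : P *m P = - 1%:M.
Proof.
rewrite mulmxA -(mulmxA (maj j)) maj_anticomm 1?eq_sym // mulmxN mulNmx.
by rewrite !mulmxA maj_sqr mul1mx maj_sqr.
Qed.

Lemma maj_pair x : maj x *m P = (if (x == j) || (x == k) then -1 else 1) *: (P *m maj x).
Proof.
have [->|neq_xj] /= := eqVneq x j.
  rewrite scaleN1r mulmxA maj_sqr mul1mx -mulmxA maj_anticomm 1?eq_sym //.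
  by rewrite mulmxN opprK mulmxA maj_sqr mul1mx.
have [->|neq_xk] /= := eqVneq x k.
  by rewrite scaleN1r mulmxA (@maj_anticomm _ _ _ j) 1?eq_sym // mulNmx -mulmxA maj_sqr.
rewrite scale1r mulmxA (@maj_anticomm _ _ _ j) // mulNmx -!mulmxA.
by rewrite (@maj_anticomm _ _ _ k) // mulmxN opprK.
Qed.

Lemma majlist_pair l :
  majlist l *m P = (-1) ^+ count (fun x => (x == j) || (x == k)) l *: (P *m majlist l).
Proof.
elim: l => [|a l IH] /=; first by rewrite mulmx1 mul1mx expr0 scale1r.
rewrite -mulmxA IH -scalemxAr (mulmxA (maj a)) maj_pair -scalemxAl scalerA -(mulmxA P).
by rewrite exprD; case: ifP; rewrite ?expr1 ?expr0 ?mulr1 ?mul1r // mulrC.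
Qed.

Definition straddle S : bool := (j \in S) != (k \in S).

Lemma majprod_pair S : majprod S *m P = (if straddle S then -1 else 1) *: (P *m majprod S).
Proof.
rewrite majprodE majlist_pair; congr (_ *: _).
have count_jk : count (fun x => (x == j) || (x == k)) (enum S) =
                (count (pred1 j) (enum S) + count (pred1 k) (enum S))%N.
  have not_jk : predI (pred1 j) (pred1 k) =1 pred0.
    by move=> z /=; have [->|] := eqVneq z j; rewrite // (negbTE neq_jk).
  by rewrite -count_predUI (eq_count not_jk) count_pred0 addn0.
rewrite count_jk !count_uniq_mem ?enum_uniq // !mem_enum /straddle.
by case: (j \in S); case: (k \in S); rewrite /= ?expr0 ?expr1 // (sqrr_sign _ 1).
Qed.

Definition pair_toggle S : {set 'I_(2 * n)} := toggle j (toggle k S).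
Definition pair_sign S : C := maj_sign k S * maj_sign j (toggle k S).

Lemma pair_majprod S : P *m majprod S = pair_sign S *: majprod (pair_toggle S).
Proof. by rewrite -mulmxA maj_majprod -scalemxAr maj_majprod scalerA. Qed.

Lemma pair_toggleK : involutive pair_toggle.
Proof. by move=> S; rewrite /pair_toggle (toggleC k j) !toggleK. Qed.

Lemma pair_sign_sqr S : pair_sign S ^+ 2 = 1.
Proof. by rewrite /pair_sign /maj_sign exprMn !sqrr_sign mulr1. Qed.

(* Applying P twice gives -1, which forces the two signs to be opposite. *)
Lemma pair_sign_toggle S : pair_sign (pair_toggle S) = - pair_sign S.
Proof.
have PPS : P *m (P *m majprod S) = - majprod S by rewrite mulmxA pair_sqr mulNmx mul1mx.
rewrite pair_majprod -scalemxAr pair_majprod pair_toggleK scalerA in PPS.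
have : (pair_sign S * pair_sign (pair_toggle S) + 1) *: majprod S = 0.
  by rewrite scalerDl PPS scale1r addNr.
move/eqP; rewrite scalemx_eq0 (negbTE (majprod_neq0 S)) orbF addr_eq0 => /eqP prod_sign.
by rewrite -[LHS]mul1r -(pair_sign_sqr S) expr2 -mulrA prod_sign mulrN1.
Qed.

Lemma straddle_pair_toggle S : straddle (pair_toggle S) = straddle S.
Proof.
rewrite /straddle /pair_toggle !mem_toggle eqxx (eq_sym k j) (negbTE neq_jk) /= eqxx.
by case: (j \in S); case: (k \in S).
Qed.

Lemma card_pair_toggle S : straddle S -> #|pair_toggle S| = #|S|.
Proof.
rewrite /straddle /pair_toggle => straddle_S.
have := card_toggle k S; have := card_toggle j (toggle k S).
rewrite mem_toggle (negbTE neq_jk) /=.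
by move: straddle_S; case: (j \in S); case: (k \in S) => //= _; lia.
Qed.

End Pair.
End MajoranaProducts.
Lemma sum_rotated_sqr (F : numFieldType) (I : finType) (P : pred I) (sg : I -> I)
    (t e : I -> F) (a b : F) :
  involutive sg -> (forall i, P (sg i) = P i) ->
  (forall i, P i -> e i ^+ 2 = 1) -> (forall i, P i -> e (sg i) = - e i) ->
  a ^+ 2 + b ^+ 2 = 1 ->
  \sum_(i | P i) (a * t i + b * e i * t (sg i)) ^+ 2 = \sum_(i | P i) t i ^+ 2.
Proof.
move=> sgK P_sg e_sqr e_sg ab1.
have sum_sg : \sum_(i | P i) t (sg i) ^+ 2 = \sum_(i | P i) t i ^+ 2.
  by rewrite [RHS](reindex_inj (inv_inj sgK)) /=; apply: eq_bigl => i; rewrite P_sg.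
have expand i : P i -> (a * t i + b * e i * t (sg i)) ^+ 2 =
    a ^+ 2 * t i ^+ 2 + b ^+ 2 * t (sg i) ^+ 2 + 2 * a * b * (e i * t i * t (sg i)).
  move=> Pi; have sqr_id : (a * t i + b * e i * t (sg i)) ^+ 2 =
      a ^+ 2 * t i ^+ 2 + b ^+ 2 * e i ^+ 2 * t (sg i) ^+ 2 + 2 * a * b * (e i * t i * t (sg i)).
    by ring.
  by rewrite sqr_id e_sqr // mulr1.
(* The cross terms cancel in pairs [i, sg i], since [e] is odd under [sg]. *)
have cross0 : \sum_(i | P i) e i * t i * t (sg i) = 0.
  set Z := LHS; have Z_opp : Z = - Z.
    rewrite /Z -sumrN [in LHS](reindex_inj (inv_inj sgK)) /=.
    rewrite [in LHS](eq_bigl P) => [|i]; last by rewrite P_sg.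
    by apply: eq_bigr => i Pi; rewrite sgK e_sg //; ring.
  have : Z *+ 2 = 0 by rewrite mulr2n {1}Z_opp addNr.
  by move/eqP; rewrite mulrn_eq0 => /eqP.
rewrite (eq_bigr _ expand) !big_split /= -!mulr_sumr sum_sg cross0 mulr0 addr0.
by rewrite -mulrDl ab1 mul1r.
Qed.

Section PairRotation.
Variable R : realType.
Local Notation C := R[i].
Variable n : nat.
Local Notation M := 'M[C]_(2 ^ n).
Local Notation maj := (@maj R n).
Local Notation majprod := (@majprod R n).
Variables j k : 'I_(2 * n).
Hypothesis neq_jk : j != k.
Local Notation P := (maj j *m maj k).
Local Notation straddle := (@straddle n j k).
Local Notation pair_toggle := (@pair_toggle n j k).
Local Notation pair_sign := (@pair_sign R n j k).

Definition pair_rot (a b : C) : M := a *: 1%:M + b *: (maj j *m maj k).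

Lemma gate_pair_rot th : gate j k th = pair_rot (cos th)%:C (sin th)%:C.
Proof. by []. Qed.

Lemma pair_rotM a b c d :
  pair_rot a b *m pair_rot c d = pair_rot (a * c - b * d) (a * d + b * c).
Proof.
rewrite /pair_rot mulmxDl !mulmxDr -!scalemxAl -!scalemxAr !mul1mx !mulmx1 pair_sqr //.
by rewrite !scalerA; apply/matrixP => x y; rewrite !mxE; ring.
Qed.

Lemma majprod_pair_rot a b S :
  majprod S *m pair_rot a b = pair_rot a (if straddle S then - b else b) *m majprod S.
Proof.
rewrite /pair_rot mulmxDr mulmxDl -!scalemxAr -!scalemxAl mulmx1 mul1mx majprod_pair //.
by rewrite scalerA; case: (straddle S); rewrite ?mulrN1 ?mulr1.
Qed.

Variables c s : C.
Hypothesis cs1 : c ^+ 2 + s ^+ 2 = 1.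

Lemma pair_rotNK : pair_rot c (- s) *m pair_rot c s = 1%:M.
Proof.
rewrite pair_rotM.
have -> : c * c - - s * s = 1 by rewrite -cs1; ring.
have -> : c * s + - s * c = 0 by ring.
by rewrite /pair_rot scale1r scale0r addr0.
Qed.

(* On a straddling monomial, conjugation rotates by the double angle. *)
Lemma conj_majprod S : pair_rot c (- s) *m majprod S *m pair_rot c s =
  if straddle S then (c ^+ 2 - s ^+ 2) *: majprod S +
    (- (2 * c * s) * pair_sign S) *: majprod (pair_toggle S)
  else majprod S.
Proof.
rewrite -mulmxA majprod_pair_rot mulmxA; case: (straddle S); last first.
  by rewrite pair_rotNK mul1mx.
rewrite pair_rotM /pair_rot mulmxDl -!scalemxAl mul1mx pair_majprod // scalerA.
by congr (_ *: _ + _ *: _); ring.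
Qed.

Lemma tr_majprod_conj A S :
  \tr (majprod S *m (pair_rot c s *m A *m pair_rot c (- s))) =
  if straddle S then (c ^+ 2 - s ^+ 2) * \tr (majprod S *m A) +
    (- (2 * c * s) * pair_sign S) * \tr (majprod (pair_toggle S) *m A)
  else \tr (majprod S *m A).
Proof.
rewrite !mulmxA mxtrace_mulC !mulmxA conj_majprod; case: (straddle S) => //.
by rewrite mulmxDl mxtraceD -!scalemxAl !mxtraceZ.
Qed.

End PairRotation.

Section Adjoint.
Variable R : realType.
Local Notation C := R[i].
Variable n : nat.
Local Notation M := 'M[C]_(2 ^ n).

Lemma adj_mul (A B : M) : adj (A *m B) = adj B *m adj A.
Proof. by rewrite /adj map_mxM trmx_mul. Qed.

Lemma adj_one : adj (1%:M : M) = 1%:M.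
Proof. by rewrite /adj map_mx1 trmx1. Qed.

Lemma adj_add (A B : M) : adj (A + B) = adj A + adj B.
Proof. by rewrite /adj map_mxD linearD. Qed.

Lemma adj_scale_real (a : R) (A : M) : adj (a%:C *: A) = a%:C *: adj A.
Proof.
apply/matrixP => x y; rewrite !mxE rmorphM.
by rewrite -[X in X * _ = _]/((a%:C)^*%C) conjc_real.
Qed.

Variables j k : 'I_(2 * n).
Hypothesis neq_jk : j != k.

Lemma adj_pair_rot_real (a b : R) :
  adj (pair_rot j k a%:C b%:C) = pair_rot j k a%:C (- b%:C).
Proof.
rewrite /pair_rot adj_add !adj_scale_real adj_one adj_mul !adj_maj maj_anticomm 1?eq_sym //.
by rewrite scalerN scaleNr.
Qed.

End Adjoint.

Section BasisExpansion.
Variable R : realType.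
Local Notation C := R[i].
Variable n : nat.
Local Notation M := 'M[C]_(2 ^ n).
Local Notation majprod := (@majprod R n).

Definition basis_coef (a : nat) : C := (sqrtC (2 ^+ n))^-1 * 'i ^+ 'C(a, 2).

Lemma Palpha_majprod a (A : M) : Palpha a A =
  basis_coef a ^+ 2 * \sum_(S : {set 'I_(2 * n)} | #|S| == a) \tr (majprod S *m A) ^+ 2.
Proof.
rewrite mulr_sumr; apply: eq_bigr => S /eqP card_S.
by rewrite /Bbasis -scalemxAl mxtraceZ exprMn card_S.
Qed.

Lemma basis_coef_sqr a : basis_coef a ^+ 2 = (2 ^+ n)^-1 * (-1) ^+ 'C(a, 2).
Proof. by rewrite /basis_coef exprMn exprVn sqrtCK exprAC sqr_i. Qed.

End BasisExpansion.

Lemma cosC2DsinC2 (R : realType) (th : R) : (cos th)%:C ^+ 2 + (sin th)%:C ^+ 2 = 1 :> R[i].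
Proof. by rewrite -!rmorphXn -rmorphD cos2Dsin2. Qed.

Section GateInvariance.
Variable R : realType.
Local Notation C := R[i].
Variable n : nat.
Local Notation M := 'M[C]_(2 ^ n).
Local Notation majprod := (@majprod R n).
Variables j k : 'I_(2 * n).
Hypothesis neq_jk : j != k.

Lemma gateN (th : R) : gate j k (- th) = pair_rot j k (cos th)%:C (- (sin th)%:C).
Proof. by rewrite gate_pair_rot cosN sinN rmorphN. Qed.

Lemma adj_gate (th : R) : adj (gate j k th) = gate j k (- th).
Proof. by rewrite gateN gate_pair_rot adj_pair_rot_real. Qed.

Lemma invmx_gate (th : R) : invmx (gate j k th) = gate j k (- th).
Proof.
have gate_mulN : gate j k th *m gate j k (- th) = 1%:M.
  by apply: mulmx1C; rewrite gateN gate_pair_rot pair_rotNK // cosC2DsinC2.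
have [unit_gate _] := mulmx1_unit gate_mulN.
by rewrite -[RHS]mul1mx -(mulVmx unit_gate) -mulmxA gate_mulN mulmx1.
Qed.

Lemma Palpha_conj_gate a (th : R) (A : M) :
  Palpha a (gate j k th *m A *m gate j k (- th)) = Palpha a A.
Proof.
rewrite gateN gate_pair_rot !Palpha_majprod; congr (_ * _).
set c := (cos th)%:C; set s := (sin th)%:C.
have cs1 : c ^+ 2 + s ^+ 2 = 1 := cosC2DsinC2 th.
have tr_conj := tr_majprod_conj neq_jk cs1 A.
rewrite (bigID (@straddle n j k)) [RHS](bigID (@straddle n j k)) /=; congr (_ + _); last first.
  by apply: eq_bigr => S /andP [_ /negbTE strad]; rewrite tr_conj strad.
rewrite (eq_bigr (fun S => ((c ^+ 2 - s ^+ 2) * \tr (majprod S *m A) +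
    - (2 * c * s) * pair_sign R j k S * \tr (majprod (pair_toggle j k S) *m A)) ^+ 2));
  last by move=> S /andP [_ strad]; rewrite tr_conj strad.
apply: sum_rotated_sqr.
- exact: pair_toggleK.
- move=> S; rewrite straddle_pair_toggle //.
  by case strad: (straddle j k S); rewrite ?andbF // card_pair_toggle.
- by move=> S _; apply: pair_sign_sqr.
- by move=> S _; apply: pair_sign_toggle.
have -> : (c ^+ 2 - s ^+ 2) ^+ 2 + (- (2 * c * s)) ^+ 2 = (c ^+ 2 + s ^+ 2) ^+ 2 by ring.
by rewrite cs1 expr1n.
Qed.

End GateInvariance.

Section VacuumEntry.
Variable R : realType.
Local Notation C := R[i].
Variable n : nat.
Local Notation M := 'M[C]_(2 ^ n).
Local Notation majprod := (@majprod R n).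
Local Notation z0 := (zero_index n).
Local Notation maj_factor := (@maj_factor R n).
Local Notation majlist := (@majlist R n).
Implicit Types (S : {set 'I_(2 * n)}) (T : {set 'I_n}).

Lemma tr_mul_rho0 (A : M) : \tr (A *m rho0 R n) = A z0 z0.
Proof.
rewrite /mxtrace (bigD1 z0) //= big1 ?addr0 => [|i neq_i].
  rewrite !mxE (bigD1 z0) //= big1 ?addr0 => [|l neq_l]; first by rewrite !mxE eqxx mulr1.
  by rewrite !mxE (negbTE neq_l) mulr0.
by rewrite !mxE big1 // => l _; rewrite !mxE [i == _](negbTE neq_i) andbF mulr0.
Qed.

Lemma qbit_zero (q : 'I_n) : qbit q z0 = false.
Proof. by rewrite /qbit /= div0n. Qed.

Definition factor_word (q : 'I_n) (l : seq nat) (G : bool -> bool -> C) :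
  bool -> bool -> C :=
  foldr (fun a f => qmul (maj_factor a q) f) G l.

Lemma majlist_qtensor (l : seq 'I_(2 * n)) :
  majlist l = qtensor (fun q => factor_word q (map val l) (sI R)).
Proof.
elim: l => [|a l IH] /=; first by rewrite qtensor1.
by rewrite IH maj_qtensor qtensorM.
Qed.

Definition nat_mem S (x : nat) : bool := if insub x is Some a then a \in S else false.

Lemma val_enum S : map val (enum S) = [seq x <- iota 0 (2 * n) | nat_mem S x].
Proof.
rewrite -val_enum_ord filter_map; congr map; rewrite enumT /enum_mem.
by apply: eq_filter => a /=; rewrite /nat_mem valK.
Qed.

Lemma factor_word_low (q : 'I_n) l G :
  all (fun x => (x < 2 * q)%N) l -> factor_word q l G = G.
Proof.
elim: l => [|x l IH] //= /andP [lt_x lt_l]; rewrite IH // maj_factorE.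
rewrite ifF; last by rewrite -[x]odd_double_half in lt_x *; lia.
by rewrite ifF ?qmul1f //; apply/negbTE; rewrite -[x]odd_double_half in lt_x *; lia.
Qed.

(* Only [Z]s act on qubit [q]; they fix the basis vector [false]. *)
Lemma factor_word_high (q : 'I_n) l : all (fun x => (2 * q + 2 <= x)%N) l ->
  factor_word q l (sI R) false false = 1 /\ factor_word q l (sI R) true false = 0.
Proof.
elim: l => [|x l IH] /=; first by rewrite /sI.
move=> /andP [le_x /IH [fw0 fw1]]; rewrite -/(factor_word q l _) maj_factorE ifT; last first.
  by rewrite -[x]odd_double_half in le_x *; lia.
by rewrite /qmul !big_bool fw0 fw1 /sZ /= !(mulr0, mul0r, mulr1, addr0, add0r).
Qed.

Lemma maj_factor_even (q : 'I_n) : maj_factor (2 * q) q = sX R.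
Proof. by rewrite maj_factorE mul2n doubleK ltnn eqxx odd_double. Qed.

Lemma maj_factor_odd (q : 'I_n) : maj_factor (2 * q).+1 q = sY R.
Proof.
rewrite maj_factorE mul2n -[(q.*2).+1]/(odd true + q.*2)%N half_bit_double.
by rewrite ltnn eqxx /= odd_double.
Qed.

Lemma even_ord_lt (q : 'I_n) : (2 * q < 2 * n)%N.
Proof. by have := ltn_ord q; lia. Qed.

Lemma odd_ord_lt (q : 'I_n) : ((2 * q).+1 < 2 * n)%N.
Proof. by have := ltn_ord q; lia. Qed.

Definition even_ord (q : 'I_n) : 'I_(2 * n) := Ordinal (even_ord_lt q).
Definition odd_ord (q : 'I_n) : 'I_(2 * n) := Ordinal (odd_ord_lt q).

Lemma nat_mem_even S (q : 'I_n) : nat_mem S (2 * q) = (even_ord q \in S).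
Proof. by rewrite /nat_mem -[(2 * q)%N]/(val (even_ord q)) valK. Qed.

Lemma nat_mem_odd S (q : 'I_n) : nat_mem S (2 * q).+1 = (odd_ord q \in S).
Proof. by rewrite /nat_mem -[(2 * q).+1]/(val (odd_ord q)) valK. Qed.

(* The vacuum entry of the factor of [c_S] on qubit [q]: [X Y = i Z] when [S] contains both
   Majoranas of qubit [q], [1] when it contains neither. *)
Definition pair_factor S (q : 'I_n) : C :=
  if even_ord q \in S then (if odd_ord q \in S then 'i else 0)
  else (if odd_ord q \in S then 0 else 1).

Lemma factor_word_vacuum S (q : 'I_n) :
  factor_word q [seq x <- iota 0 (2 * n) | nat_mem S x] (sI R) false false = pair_factor S q.
Proof.
have split_iota : (2 * n = 2 * q + (2 + (2 * n - (2 * q + 2))))%N by have := ltn_ord q; lia.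
rewrite split_iota iotaD [iota _ (2 + _)]iotaD !filter_cat /factor_word !foldr_cat add0n.
set high := foldr _ (sI R) _.
have [high0 high1] : high false false = 1 /\ high true false = 0.
  by apply: factor_word_high; apply/allP => x; rewrite mem_filter mem_iota => /andP [_]; lia.
rewrite -/(factor_word q _ _) factor_word_low; last first.
  by apply/allP => x; rewrite mem_filter mem_iota => /andP [_]; lia.
rewrite /= nat_mem_even nat_mem_odd /pair_factor.
case: (even_ord q \in S); case: (odd_ord q \in S) => /=;
  rewrite ?maj_factor_even ?maj_factor_odd /qmul ?big_bool /sX /sY /= ?high0 ?high1 ?big_bool /=;
  by rewrite ?(mulr0, mul0r, mulr1, mul1r, addr0, add0r).
Qed.

Lemma majprod_vacuum S : majprod S z0 z0 = \prod_q pair_factor S q.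
Proof.
rewrite majprodE majlist_qtensor mxE; apply: eq_bigr => q _.
by rewrite qbit_zero val_enum factor_word_vacuum.
Qed.

Definition pair_set T : {set 'I_(2 * n)} := even_ord @: T :|: odd_ord @: T.
Definition even_half S : {set 'I_n} := [set q | even_ord q \in S].

Lemma even_ord_inj : injective even_ord.
Proof. by move=> q q' /(congr1 val) /= eq_q; apply: val_inj => /=; lia. Qed.

Lemma odd_ord_inj : injective odd_ord.
Proof. by move=> q q' /(congr1 val) /= eq_q; apply: val_inj => /=; lia. Qed.

Lemma even_neq_odd (q q' : 'I_n) : even_ord q != odd_ord q'.
Proof. by apply/negP => /eqP /(congr1 val) /=; lia. Qed.

Lemma mem_pair_set_even T q : (even_ord q \in pair_set T) = (q \in T).
Proof.
rewrite in_setU (mem_imset _ _ even_ord_inj); case: (q \in T) => //=.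
by apply/imsetP => [[q' _ eq_q]]; move: (even_neq_odd q q'); rewrite eq_q eqxx.
Qed.

Lemma mem_pair_set_odd T q : (odd_ord q \in pair_set T) = (q \in T).
Proof.
rewrite in_setU (mem_imset _ _ odd_ord_inj) orbC; case: (q \in T) => //=.
by apply/imsetP => [[q' _ eq_q]]; move: (even_neq_odd q' q); rewrite -eq_q eqxx.
Qed.

Lemma pair_setK : cancel pair_set even_half.
Proof. by move=> T; apply/setP => q; rewrite inE mem_pair_set_even. Qed.

Lemma card_pair_set T : #|pair_set T| = (2 * #|T|)%N.
Proof.
rewrite cardsU !card_imset //; try exact: even_ord_inj; try exact: odd_ord_inj.
suff -> : even_ord @: T :&: odd_ord @: T = set0 by rewrite cards0 subn0 addnn mul2n.
apply/setP => x; rewrite !inE; apply/negP => /andP [/imsetP [q _ ->] /imsetP [q' _ eq_q]].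
by move: (even_neq_odd q q'); rewrite eq_q eqxx.
Qed.

Definition half_ord (x : 'I_(2 * n)) : 'I_n := Ordinal (half_ord_lt x).

Lemma even_odd_half_ord (x : 'I_(2 * n)) :
  x = if odd x then odd_ord (half_ord x) else even_ord (half_ord x).
Proof.
by apply: val_inj; case: ifP => odd_x /=; rewrite -{1}[val x]odd_double_half odd_x /=; lia.
Qed.

Lemma prod_pair_factor_pair_set T : \prod_q pair_factor (pair_set T) q = 'i ^+ #|T|.
Proof.
rewrite -prodr_const (big_mkcond (fun q => q \in T)) /=; apply: eq_bigr => q _.
by rewrite /pair_factor mem_pair_set_even mem_pair_set_odd; case: (q \in T).
Qed.

Lemma prod_pair_factor_eq0 S : S != pair_set (even_half S) -> \prod_q pair_factor S q = 0.
Proof.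
move=> not_pairs; have [x mem_x] : exists x, (x \in S) != (x \in pair_set (even_half S)).
  apply/existsP; apply: contraNT not_pairs; rewrite negb_exists => /forallP eq_mem.
  by apply/eqP/setP => x; move: (eq_mem x); rewrite negbK => /eqP.
rewrite (bigD1 (half_ord x)) //= (_ : pair_factor S (half_ord x) = 0) ?mul0r //.
move: mem_x; rewrite [in X in X -> _](even_odd_half_ord x); case: ifP => _.
  rewrite mem_pair_set_odd inE /pair_factor.
  by case: (even_ord (half_ord x) \in S); case: (odd_ord (half_ord x) \in S).
by rewrite mem_pair_set_even inE eqxx.
Qed.

Lemma sum_sqr_prod_pair_factor a :
  \sum_(S : {set 'I_(2 * n)} | #|S| == a) (\prod_q pair_factor S q) ^+ 2 =
  \sum_(T : {set 'I_n} | (2 * #|T|)%N == a) (-1) ^+ #|T|.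
Proof.
rewrite (bigID (fun S => S == pair_set (even_half S))) /= [X in _ + X]big1 ?addr0; last first.
  by move=> S /andP [_ /prod_pair_factor_eq0 ->]; rewrite expr0n.
rewrite (reindex_onto pair_set even_half) => [|S /andP [_ /eqP <-] //].
apply: eq_big => T; first by rewrite pair_setK !eqxx !andbT card_pair_set.
by move=> _; rewrite prod_pair_factor_pair_set exprAC sqr_i.
Qed.

End VacuumEntry.

Lemma bin2_double_add m : ('C(m.*2, 2) + m = (m ^ 2).*2)%N.
Proof. by rewrite bin2 -doubleMl doubleK -!mul2n; case: m => [|m] //; nia. Qed.

Lemma Palpha_rho0 (R : realType) (n a : nat) :
  Palpha a (rho0 R n) = if odd a then 0 else 'C(n, a./2)%:R / 2 ^+ n.
Proof.
rewrite Palpha_majprod (eq_bigr (fun S => (\prod_q @pair_factor R n S q) ^+ 2));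
  last by move=> S _; rewrite tr_mul_rho0 majprod_vacuum.
rewrite sum_sqr_prod_pair_factor basis_coef_sqr; case: ifP => odd_a.
  rewrite big_pred0 ?mulr0 // => T; apply/negbTE/eqP => card_T.
  by move: odd_a; rewrite -card_T oddM.
have -> : a = (a./2).*2 by rewrite -[a in LHS]odd_double_half odd_a.
move: (a./2) => m; rewrite doubleK.
rewrite (eq_bigl (fun T => T \in [set T : {set 'I_n} | #|T| == m])) => [|T]; last first.
  by rewrite inE -mul2n eqn_pmul2l.
rewrite (eq_bigr (fun _ => (-1) ^+ m)) => [|T]; last by rewrite inE => /eqP ->.
rewrite sumr_const card_draws card_ord mulrnAr -mulrA -exprD bin2_double_add.
by rewrite -signr_odd odd_double expr0 mulr1 -mulr_natr mulrC.
Qed.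

Lemma gaussian_stateM (R : realType) (n : nat) (G U : 'M[R[i]]_(2 ^ n)) :
  gaussian_state (G *m U) = G *m gaussian_state U *m adj G.
Proof. by rewrite /gaussian_state adj_mul !mulmxA. Qed.

Lemma Palpha_gaussian_word (R : realType) (n a : nat) (w : word R n) : word_ok w ->
  Palpha a (gaussian_state (word_eval w)) = Palpha a (rho0 R n).
Proof.
elim: w => [|[[[j k] th] inv] w IH] /=.
  by rewrite /gaussian_state adj_one mul1mx mulmx1.
move=> /andP [lt_jk /IH <-]; have neq_jk : j != k by rewrite neq_ltn lt_jk.
by rewrite gaussian_stateM; case: inv; rewrite ?invmx_gate // adj_gate // Palpha_conj_gate.
Qed.

Theorem mainTheorem8 (R : realType) (n : nat) (U : 'M[R[i]]_(2 ^ n)) :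
  in_gaussian_group U ->
  forall alpha : nat, (alpha <= 2 * n)%N ->
    Palpha alpha (gaussian_state U) =
    (if odd alpha then 0 else 'C(n, alpha./2)%:R / 2 ^+ n).
Proof.
move=> [w [ok_w ->]] alpha _.
by rewrite Palpha_gaussian_word // Palpha_rho0.
Qed.
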